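(* Let $G=(V,w,m)$ be a locally finite connected weighted graph which is weakly spherically symmetric with respect to $x_0\in V$, and suppose $G$ satisfies $CD(K,n)$ for some $K\in\mathbb R$, $n\in(0,\infty]$. Then $G_P^{x_0}$ satisfies $CD(K,n)$.
   Context: A weighted graph is $G=(V,w,m)$ with $V$ countable, $w:V\times V\to[0,\infty)$ symmetric with $w(x,x)=0$, $m:V\to(0,\infty)$; $x\sim y$ iff $w(x,y)>0$. Laplacian $\Delta f(x)=\frac1{m(x)}\sum_yw(x,y)(f(y)-f(x))$. $2\Gamma(f,g)=\Delta(fg)-f\Delta g-g\Delta f$, $2\Gamma_2(f,g)=\Delta\Gamma(f,g)-\Gamma(f,\Delta g)-\Gamma(g,\Delta f)$, $\Gamma f=\Gamma(f,f)$, $\Gamma_2f=\Gamma_2(f,f)$; $CD(K,n)$ means $\Gamma_2f(x)\ge\frac1n(\Delta f(x))^2+K\Gamma f(x)$ for all $f$ and all vertices $x$ (with $\frac1\infty=0$). $d$ is the combinatorial distance, $S_i(x_0)=\{y:d(x_0,y)=i\}$; $m(A)=\sum_{x\in A}m(x)$, $w(A,B)=\sum_{(x,y)\in A\times B}w(x,y)$. $d_\mp^{x_0}(z)=\sum_{y\sim z,\ d(y,x_0)\lessgtr d(z,x_0)}\frac{w(y,z)}{m(z)}$. $G$ is weakly spherically symmetric w.r.t. $x_0$ if for all $y,z$ with $d(y,x_0)=d(z,x_0)$: $m(y)=m(z)$, $d_-^{x_0}(y)=d_-^{x_0}(z)$, $d_+^{x_0}(y)=d_+^{x_0}(z)$.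 $G_P^{x_0}=(V_G^{x_0},w_G^{x_0},m_G^{x_0})$ has vertex set $V_G^{x_0}=\{i\in\mathbb N_0:i\le\sup_yd(x_0,y)\}$, $w_G^{x_0}(i,j)=w(S_i(x_0),S_j(x_0))$ if $|i-j|=1$ and $0$ otherwise, $m_G^{x_0}(i)=m(S_i(x_0))$. *)

From Stdlib Require Import Reals List Arith ClassicalEpsilon.
Import ListNotations.
Open Scope R_scope.

Record wgraph := WGraph {
  vtx : Type;
  wt : vtx -> vtx -> R;
  ms : vtx -> R }.

Definition is_weighted_graph (G : wgraph) : Prop :=
  (exists f : vtx G -> nat, forall x y, f x = f y -> x = y) /\
  (forall x y, 0 <= wt G x y) /\
  (forall x y, wt G x y = wt G y x) /\
  (forall x, wt G x x = 0) /\
  (forall x, 0 < ms G x).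

Definition lsum {A : Type} (l : list A) (f : A -> R) : R :=
  fold_right Rplus 0 (map f l).

Definition nbr_list_spec (G : wgraph) (x : vtx G) (l : list (vtx G)) : Prop :=
  NoDup l /\ forall y, 0 < wt G x y <-> In y l.

Definition locally_finite (G : wgraph) : Prop :=
  forall x, exists l, nbr_list_spec G x l.

(** the (chosen) finite list of neighbours of x; meaningful when G is locally finite *)
Definition nbrs (G : wgraph) (x : vtx G) : list (vtx G) :=
  epsilon (inhabits nil) (nbr_list_spec G x).

Definition lap (G : wgraph) (f : vtx G -> R) (x : vtx G) : R :=
  / ms G x * lsum (nbrs G x) (fun y => wt G x y * (f y - f x)).

Definition Gam (G : wgraph) (f g : vtx G -> R) (x : vtx G) : R :=
  / 2 * (lap G (fun z => f z * g z) x - f x * lap G g x - g x * lap G f x).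

Definition Gam2 (G : wgraph) (f g : vtx G -> R) (x : vtx G) : R :=
  / 2 * (lap G (Gam G f g) x - Gam G f (lap G g) x - Gam G g (lap G f) x).

(** dimension parameter n in (0, infinity]: [Some n] is finite n, [None] is infinity *)
Definition dim_ok (n : option R) : Prop :=
  match n with Some r => 0 < r | None => True end.

Definition inv_dim (n : option R) : R :=
  match n with Some r => / r | None => 0 end.

Definition CD (G : wgraph) (K : R) (n : option R) : Prop :=
  forall (f : vtx G -> R) (x : vtx G),
    Gam2 G f f x >= inv_dim n * (lap G f x) ^ 2 + K * Gam G f f x.

Inductive walk (G : wgraph) : vtx G -> vtx G -> nat -> Prop :=
| walk_nil : forall x, walk G x x 0
| walk_cons : forall x y z k, 0 < wt G x y -> walk G y z k -> walk G x z (S k).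

Definition connected (G : wgraph) : Prop :=
  forall x y, exists k, walk G x y k.

Definition is_dist (G : wgraph) (x y : vtx G) (k : nat) : Prop :=
  walk G x y k /\ forall k', walk G x y k' -> (k <= k')%nat.

Definition dist (G : wgraph) (x y : vtx G) : nat :=
  epsilon (inhabits 0%nat) (is_dist G x y).

Definition dminus (G : wgraph) (x0 z : vtx G) : R :=
  lsum (nbrs G z) (fun y =>
    if Nat.ltb (dist G y x0) (dist G z x0) then wt G y z / ms G z else 0).

Definition dplus (G : wgraph) (x0 z : vtx G) : R :=
  lsum (nbrs G z) (fun y =>
    if Nat.ltb (dist G z x0) (dist G y x0) then wt G y z / ms G z else 0).

Definition weakly_spherically_symmetric (G : wgraph) (x0 : vtx G) : Prop :=
  forall y z, dist G y x0 = dist G z x0 ->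
    ms G y = ms G z /\ dminus G x0 y = dminus G x0 z /\ dplus G x0 y = dplus G x0 z.

(** spheres S_i(x0) as (chosen) finite lists; meaningful when finite *)
Definition sphere_spec (G : wgraph) (x0 : vtx G) (i : nat) (l : list (vtx G)) : Prop :=
  NoDup l /\ forall y, In y l <-> dist G x0 y = i.

Definition sphere (G : wgraph) (x0 : vtx G) (i : nat) : list (vtx G) :=
  epsilon (inhabits nil) (sphere_spec G x0 i).

Definition mset (G : wgraph) (A : list (vtx G)) : R := lsum A (ms G).

Definition wset (G : wgraph) (A B : list (vtx G)) : R :=
  lsum A (fun x => lsum B (fun y => wt G x y)).

Definition VP (G : wgraph) (x0 : vtx G) : Type :=
  { i : nat | exists y, (i <= dist G x0 y)%nat }.

Definition GP (G : wgraph) (x0 : vtx G) : wgraph :=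
  {| vtx := VP G x0;
     wt := fun i j =>
       if orb (Nat.eqb (S (proj1_sig i)) (proj1_sig j))
              (Nat.eqb (S (proj1_sig j)) (proj1_sig i))
       then wset G (sphere G x0 (proj1_sig i)) (sphere G x0 (proj1_sig j))
       else 0;
     ms := fun i => mset G (sphere G x0 (proj1_sig i)) |}.

(* A function f on G_P lifts to the radial function f(d(x0,.)) on G.  For a
   radial function the Laplacian at x only sees d_+(x) and d_-(x), and weak
   spherical symmetry makes these the transition rates
   w(S_k,S_(k+1))/m(S_k) and w(S_k,S_(k-1))/m(S_k) of G_P.  Hence lifting
   intertwines the Laplacians of G_P and G, and therefore Gamma and Gamma_2 as
   well; CD(K,n) at a vertex x of G tested on lifted functions is exactly
   CD(K,n) at the vertex d(x0,x) of G_P, and every vertex of G_P arises so. *)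
From Stdlib Require Import Reals List Wf_nat Lia Lra.
From Stdlib Require Import Classical ClassicalEpsilon ProofIrrelevance FunctionalExtensionality.
Import ListNotations.
Open Scope R_scope.

Lemma lsum_ext_in {A : Type} (l : list A) (F H : A -> R) :
  (forall x, In x l -> F x = H x) -> lsum l F = lsum l H.
Proof.
  induction l as [|a l IH]; intros E; unfold lsum in *; simpl; [reflexivity|].
  rewrite E by (left; reflexivity). f_equal. apply IH. intros x Hx. apply E. right; exact Hx.
Qed.

Lemma lsum_app {A : Type} (l1 l2 : list A) (F : A -> R) :
  lsum (l1 ++ l2) F = lsum l1 F + lsum l2 F.
Proof. induction l1; unfold lsum in *; simpl; [lra|]. rewrite IHl1. lra. Qed.

Lemma lsum_plus {A : Type} (l : list A) (F H : A -> R) :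
  lsum l (fun x => F x + H x) = lsum l F + lsum l H.
Proof. induction l; unfold lsum in *; simpl; [lra|]. rewrite IHl. lra. Qed.

Lemma lsum_scal {A : Type} (l : list A) c (F : A -> R) :
  lsum l (fun x => c * F x) = c * lsum l F.
Proof. induction l; unfold lsum in *; simpl; [lra|]. rewrite IHl. lra. Qed.

Lemma lsum_scal_r {A : Type} (l : list A) c (F : A -> R) :
  lsum l (fun x => F x * c) = lsum l F * c.
Proof. induction l; unfold lsum in *; simpl; [lra|]. rewrite IHl. lra. Qed.

Lemma lsum_zero {A : Type} (l : list A) (F : A -> R) :
  (forall x, In x l -> F x = 0) -> lsum l F = 0.
Proof.
  intros E. rewrite (lsum_ext_in l F (fun _ => 0)) by exact E. clear E.
  induction l; unfold lsum in *; simpl; [|rewrite IHl]; lra.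
Qed.

Lemma lsum_nonneg {A : Type} (l : list A) (F : A -> R) :
  (forall x, In x l -> 0 <= F x) -> 0 <= lsum l F.
Proof.
  induction l as [|a l IH]; intros E; unfold lsum in *; simpl; [lra|].
  assert (0 <= F a) by (apply E; left; reflexivity).
  assert (0 <= fold_right Rplus 0 (map F l)) by (apply IH; intros x Hx; apply E; right; exact Hx).
  lra.
Qed.

Lemma lsum_pos {A : Type} (l : list A) (F : A -> R) a :
  In a l -> (forall x, In x l -> 0 < F x) -> 0 < lsum l F.
Proof.
  induction l as [|b l IH]; intros Ha E; [destruct Ha|]. unfold lsum; simpl.
  assert (0 < F b) by (apply E; left; reflexivity).
  assert (0 <= lsum l F) by (apply lsum_nonneg; intros x Hx; apply Rlt_le, E; right; exact Hx).
  unfold lsum in *. lra.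
Qed.

Lemma lsum_swap {A B : Type} (l : list A) (l' : list B) (F : A -> B -> R) :
  lsum l (fun x => lsum l' (F x)) = lsum l' (fun y => lsum l (fun x => F x y)).
Proof.
  induction l as [|a l IH]; simpl.
  - induction l' as [|b l' IH']; unfold lsum in *; simpl in *; [|rewrite <- IH']; lra.
  - change (lsum l' (F a) + lsum l (fun x => lsum l' (F x))
            = lsum l' (fun y => F a y + lsum l (fun x => F x y))).
    rewrite IH, lsum_plus. reflexivity.
Qed.

Lemma lsum_indicator {A : Type} (l : list A) (a : A) (c : R) : NoDup l ->
  lsum l (fun x => if excluded_middle_informative (x = a) then c else 0) =
  if excluded_middle_informative (In a l) then c else 0.
Proof.
  induction l as [|b l IH]; intros Hnd; simpl.
  - destruct (excluded_middle_informative False); [contradiction|reflexivity].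
  - inversion Hnd; subst. change (lsum (b :: l) ?G) with (G b + lsum l G).
    rewrite IH by assumption.
    destruct (excluded_middle_informative (b = a)), (excluded_middle_informative (In a l)),
      (excluded_middle_informative (b = a \/ In a l)); subst; tauto || lra.
Qed.

Lemma lsum_support {A : Type} (l1 l2 : list A) (F : A -> R) : NoDup l1 -> NoDup l2 ->
  (forall y, In y l1 -> ~ In y l2 -> F y = 0) ->
  (forall y, In y l2 -> ~ In y l1 -> F y = 0) ->
  lsum l1 F = lsum l2 F.
Proof.
  intros Hnd1 Hnd2 E1 E2.
  transitivity (lsum l1 (fun x =>
    lsum l2 (fun y => if excluded_middle_informative (y = x) then F x else 0))).
  { apply lsum_ext_in. intros x Hx. rewrite lsum_indicator by assumption.
    destruct (excluded_middle_informative (In x l2)); auto. }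
  rewrite lsum_swap. apply lsum_ext_in. intros y Hy.
  transitivity (lsum l1 (fun x => if excluded_middle_informative (x = y) then F y else 0)).
  { apply lsum_ext_in. intros x _.
    destruct (excluded_middle_informative (y = x)), (excluded_middle_informative (x = y));
      subst; tauto. }
  rewrite lsum_indicator by assumption.
  destruct (excluded_middle_informative (In y l1)); auto. symmetry. auto.
Qed.

Lemma nbr_list_of_cover (G : wgraph) x (l : list (vtx G)) :
  NoDup l -> (forall y, 0 < wt G x y -> In y l) -> exists l', nbr_list_spec G x l'.
Proof.
  intros Hnd Hcov.
  exists (filter (fun y => if excluded_middle_informative (0 < wt G x y) then true else false) l).
  split; [apply NoDup_filter; exact Hnd|]. intros y. rewrite filter_In.
  destruct (excluded_middle_informative (0 < wt G x y)) as [Hpos|Hpos]; split; intros H.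
  - split; [exact (Hcov y H)|reflexivity].
  - exact Hpos.
  - contradiction.
  - destruct H as [_ E]. discriminate E.
Qed.

Lemma lap_on_cover (G : wgraph) x (l : list (vtx G)) f :
  (forall y, 0 <= wt G x y) -> NoDup l -> (forall y, 0 < wt G x y -> In y l) ->
  lap G f x = / ms G x * lsum l (fun y => wt G x y * (f y - f x)).
Proof.
  intros Hnn Hnd Hcov. unfold lap. f_equal.
  assert (Hspec : nbr_list_spec G x (nbrs G x))
    by (unfold nbrs; apply epsilon_spec; exact (nbr_list_of_cover G x l Hnd Hcov)).
  destruct Hspec as [Hnd' Hnbr].
  apply lsum_support; [exact Hnd'|exact Hnd| |].
  - intros y Hy Hnot. apply Hnbr, Hcov in Hy. contradiction.
  - intros y _ Hy. rewrite <- Hnbr in Hy. pose proof (Hnn y).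
    replace (wt G x y) with 0 by lra. ring.
Qed.

Section Distance.

Variable G : wgraph.
Hypothesis wt_sym : forall x y, wt G x y = wt G y x.
Hypothesis G_connected : connected G.

Lemma walk_snoc x y z k : walk G x y k -> 0 < wt G y z -> walk G x z (S k).
Proof.
  induction 1 as [x|x y' y k Hxy _ IH]; intros Hyz.
  - apply walk_cons with z; [exact Hyz|constructor].
  - apply walk_cons with y'; auto.
Qed.

Lemma walk_rev x y k : walk G x y k -> walk G y x k.
Proof.
  induction 1 as [x|x y' y k Hxy _ IH]; [constructor|].
  apply walk_snoc with y'; [exact IH|]. rewrite wt_sym. exact Hxy.
Qed.

Lemma dist_spec x y : is_dist G x y (dist G x y).
Proof.
  unfold dist. apply epsilon_spec.
  destruct (dec_inh_nat_subset_has_unique_least_element (walk G x y)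
              (fun k => classic _) (G_connected x y)) as [k [[Hk Hmin] _]].
  exists k. split; assumption.
Qed.

Lemma dist_walk x y : walk G x y (dist G x y).
Proof. apply dist_spec. Qed.

Lemma dist_min x y k : walk G x y k -> (dist G x y <= k)%nat.
Proof. apply dist_spec. Qed.

Lemma dist_sym x y : dist G x y = dist G y x.
Proof. apply Nat.le_antisymm; apply dist_min, walk_rev, dist_walk. Qed.

Lemma dist_refl x : dist G x x = 0%nat.
Proof. pose proof (dist_min x x 0 (walk_nil G x)). lia. Qed.

Lemma dist_eq0 x y : dist G x y = 0%nat -> x = y.
Proof.
  intros E. pose proof (dist_walk x y) as W. rewrite E in W. inversion W. reflexivity.
Qed.

Lemma dist_adj_le x y z : 0 < wt G x y -> (dist G y z <= S (dist G x z))%nat.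
Proof.
  intros Hxy. apply dist_min. apply walk_cons with x; [rewrite wt_sym; exact Hxy|apply dist_walk].
Qed.

Lemma dist_pred x z k : dist G x z = S k -> exists a, 0 < wt G x a /\ dist G a z = k.
Proof.
  intros E. pose proof (dist_walk x z) as W. rewrite E in W.
  inversion W as [|x' a k' z' Hxa Haz]; subst.
  exists a. split; [exact Hxa|].
  assert (Hax : 0 < wt G a x) by (rewrite wt_sym; exact Hxa).
  pose proof (dist_min a z k Haz). pose proof (dist_adj_le a x z Hax). lia.
Qed.

Lemma dist_level_exists x0 y k : (k <= dist G x0 y)%nat -> exists x, dist G x0 x = k.
Proof.
  remember (dist G x0 y) as d eqn:Ed. revert y Ed.
  induction d as [|d IH]; intros y Ed Hk.
  - exists y. lia.
  - destruct (Nat.eq_dec k (S d)) as [->|Hne]; [exists y; auto|].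
    rewrite dist_sym in Ed. destruct (dist_pred y x0 d (eq_sym Ed)) as [a [_ Ha]].
    apply (IH a); [rewrite dist_sym; auto|lia].
Qed.

End Distance.

Section Projection.

Variable G : wgraph.
Variable x0 : vtx G.
Hypothesis wt_nonneg : forall x y, 0 <= wt G x y.
Hypothesis wt_sym : forall x y, wt G x y = wt G y x.
Hypothesis ms_pos : forall x, 0 < ms G x.
Hypothesis G_locally_finite : locally_finite G.
Hypothesis G_connected : connected G.
Hypothesis G_wss : weakly_spherically_symmetric G x0.

Lemma nbrs_spec x : nbr_list_spec G x (nbrs G x).
Proof. unfold nbrs. apply epsilon_spec. apply G_locally_finite. Qed.

Lemma sphere_correct i : sphere_spec G x0 i (sphere G x0 i).
Proof.
  unfold sphere. apply epsilon_spec. induction i as [|i [l [Hnd Hl]]].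
  - exists [x0]. split; [repeat constructor; simpl; tauto|].
    intros y. simpl. split.
    + intros [<-|[]]. apply (dist_refl G G_connected).
    + intros E. left. exact (dist_eq0 G G_connected x0 y E).
  - exists (nodup (fun a b => excluded_middle_informative (a = b))
              (filter (fun y => Nat.eqb (dist G x0 y) (S i)) (concat (map (nbrs G) l)))).
    split; [apply NoDup_nodup|]. intros y.
    rewrite nodup_In, filter_In, in_concat, Nat.eqb_eq. split; [tauto|].
    intros E. split; [|exact E].
    rewrite (dist_sym G wt_sym G_connected) in E.
    destruct (dist_pred G wt_sym G_connected y x0 i E) as [a [Hya Ha]].
    exists (nbrs G a). split.
    + apply in_map, Hl. rewrite (dist_sym G wt_sym G_connected). exact Ha.
    + apply (nbrs_spec a). rewrite wt_sym. exact Hya.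
Qed.

Lemma in_sphere y i : In y (sphere G x0 i) <-> dist G x0 y = i.
Proof. apply sphere_correct. Qed.

Lemma sphere_wt_sum x j :
  lsum (sphere G x0 j) (fun y => wt G x y) =
  lsum (nbrs G x) (fun y => if Nat.eqb (dist G x0 y) j then wt G x y else 0).
Proof.
  destruct (sphere_correct j) as [Hnd Hsph]. destruct (nbrs_spec x) as [Hnd' Hnbr].
  transitivity (lsum (sphere G x0 j) (fun y => if Nat.eqb (dist G x0 y) j then wt G x y else 0)).
  { apply lsum_ext_in. intros y Hy. apply Hsph, Nat.eqb_eq in Hy. rewrite Hy. reflexivity. }
  apply lsum_support; [exact Hnd|exact Hnd'| |].
  - intros y _ Hy. rewrite <- Hnbr in Hy. pose proof (wt_nonneg x y).
    destruct (Nat.eqb _ _); lra.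
  - intros y _ Hy. rewrite Hsph, <- Nat.eqb_eq in Hy. apply Bool.not_true_is_false in Hy.
    rewrite Hy. reflexivity.
Qed.

Lemma nbr_dist_between x y : 0 < wt G x y ->
  (dist G x0 y <= S (dist G x0 x))%nat /\ (dist G x0 x <= S (dist G x0 y))%nat.
Proof.
  intros Hxy. rewrite !(dist_sym G wt_sym G_connected x0).
  split; apply (dist_adj_le G wt_sym G_connected); [exact Hxy|rewrite wt_sym; exact Hxy].
Qed.

Lemma wt_row_succ x :
  lsum (sphere G x0 (S (dist G x0 x))) (fun y => wt G x y) = ms G x * dplus G x0 x.
Proof.
  rewrite sphere_wt_sum. unfold dplus. rewrite <- lsum_scal.
  apply lsum_ext_in. intros y Hy. apply nbrs_spec, nbr_dist_between in Hy.
  rewrite !(dist_sym G wt_sym G_connected _ x0), (wt_sym y x). pose proof (ms_pos x).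
  destruct (Nat.eqb_spec (dist G x0 y) (S (dist G x0 x))),
    (Nat.ltb_spec (dist G x0 x) (dist G x0 y)); try lia; field; lra.
Qed.

Lemma wt_row_pred x k : dist G x0 x = S k ->
  lsum (sphere G x0 k) (fun y => wt G x y) = ms G x * dminus G x0 x.
Proof.
  intros Ex. rewrite sphere_wt_sum. unfold dminus. rewrite <- lsum_scal.
  apply lsum_ext_in. intros y Hy. apply nbrs_spec, nbr_dist_between in Hy.
  rewrite !(dist_sym G wt_sym G_connected _ x0), (wt_sym y x). pose proof (ms_pos x).
  destruct (Nat.eqb_spec (dist G x0 y) k),
    (Nat.ltb_spec (dist G x0 y) (dist G x0 x)); try lia; field; lra.
Qed.

Lemma wss_same_sphere x y : dist G x0 y = dist G x0 x ->
  dplus G x0 y = dplus G x0 x /\ dminus G x0 y = dminus G x0 x.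
Proof.
  intros E. rewrite !(dist_sym G wt_sym G_connected x0) in E.
  destruct (G_wss y x E) as [_ [Hminus Hplus]]. auto.
Qed.

Lemma wset_succ x :
  wset G (sphere G x0 (dist G x0 x)) (sphere G x0 (S (dist G x0 x))) =
  mset G (sphere G x0 (dist G x0 x)) * dplus G x0 x.
Proof.
  unfold wset, mset. rewrite <- lsum_scal_r. apply lsum_ext_in. intros y Hy.
  apply in_sphere in Hy. rewrite <- Hy, wt_row_succ.
  rewrite (proj1 (wss_same_sphere x y Hy)). reflexivity.
Qed.

Lemma wset_pred x k : dist G x0 x = S k ->
  wset G (sphere G x0 (S k)) (sphere G x0 k) = mset G (sphere G x0 (S k)) * dminus G x0 x.
Proof.
  intros Ex. unfold wset, mset. rewrite <- lsum_scal_r. apply lsum_ext_in. intros y Hy.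
  apply in_sphere in Hy. rewrite (wt_row_pred y k Hy).
  rewrite (proj2 (wss_same_sphere x y (eq_trans Hy (eq_sym Ex)))). reflexivity.
Qed.

Lemma mset_sphere_pos x : 0 < mset G (sphere G x0 (dist G x0 x)).
Proof. apply lsum_pos with x; [apply in_sphere; reflexivity|intros; apply ms_pos]. Qed.

Lemma wset_nonneg a b : 0 <= wset G a b.
Proof. apply lsum_nonneg. intros. apply lsum_nonneg. intros. apply wt_nonneg. Qed.

Lemma lap_radial (g : nat -> R) x :
  let k := dist G x0 x in
  lap G (fun y => g (dist G x0 y)) x =
  dplus G x0 x * (g (S k) - g k) + dminus G x0 x * (g (pred k) - g k).
Proof.
  intros k. unfold lap, dplus, dminus.
  rewrite <- lsum_scal, <- !lsum_scal_r, <- lsum_plus. apply lsum_ext_in.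
  intros y Hy. apply nbrs_spec, nbr_dist_between in Hy. fold k in Hy.
  rewrite !(dist_sym G wt_sym G_connected _ x0), (wt_sym y x). fold k.
  pose proof (ms_pos x).
  destruct (Nat.ltb_spec k (dist G x0 y)), (Nat.ltb_spec (dist G x0 y) k).
  - lia.
  - replace (dist G x0 y) with (S k) by lia. field. lra.
  - replace (dist G x0 y) with (pred k) by lia. field. lra.
  - replace (dist G x0 y) with k by lia. field. lra.
Qed.

Definition level (x : vtx G) : VP G x0 := exist _ (dist G x0 x) (ex_intro _ x (le_n _)).

Definition lift (f : VP G x0 -> R) (x : vtx G) : R := f (level x).

(* [at_level k] is [[k]] when k is a vertex of G_P and [[]] beyond the radius,
   so [level_value f] extends f by 0 to all of nat. *)
Definition at_level (k : nat) : list (VP G x0) :=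
  match excluded_middle_informative (exists y, (k <= dist G x0 y)%nat) with
  | left p => [exist _ k p]
  | right _ => []
  end.

Definition level_value (f : VP G x0 -> R) (k : nat) : R := lsum (at_level k) f.

Lemma at_level_index (j : VP G x0) : at_level (proj1_sig j) = [j].
Proof.
  unfold at_level. destruct j as [k p]; simpl.
  destruct (excluded_middle_informative _) as [q|q]; [|contradiction].
  rewrite (proof_irrelevance _ q p). reflexivity.
Qed.

Lemma in_at_level (j : VP G x0) m : proj1_sig j = m -> In j (at_level m).
Proof. intros <-. rewrite at_level_index. left. reflexivity. Qed.

Lemma level_value_dist f x : level_value f (dist G x0 x) = lift f x.
Proof.
  unfold level_value, lift. change (dist G x0 x) with (proj1_sig (level x)).
  rewrite at_level_index. unfold lsum. simpl. ring.
Qed.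

Lemma lift_radial f : lift f = fun y => level_value f (dist G x0 y).
Proof. apply functional_extensionality. intros y. symmetry. apply level_value_dist. Qed.

Lemma wt_GP_nonneg i j : 0 <= wt (GP G x0) i j.
Proof. simpl. destruct (_ || _)%bool; [apply wset_nonneg|lra]. Qed.

(* m = k is allowed so that the lemma covers m = pred k when k = 0; both sides
   then vanish. *)
Lemma at_level_adjacent_sum (f : VP G x0 -> R) x m :
  let k := dist G x0 x in
  (pred k <= m <= S k)%nat ->
  lsum (at_level m) (fun j => wt (GP G x0) (level x) j * (f j - f (level x))) =
  wset G (sphere G x0 k) (sphere G x0 m) * (level_value f m - level_value f k).
Proof.
  intros k Hm. change (level_value f k) with (level_value f (dist G x0 x)).
  rewrite level_value_dist. unfold lift, level_value, at_level.
  destruct (excluded_middle_informative _) as [p|p].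
  - unfold lsum. cbn [map fold_right wt GP level proj1_sig]. fold k.
    destruct (Nat.eqb_spec (S k) m), (Nat.eqb_spec (S m) k); simpl; try ring.
    assert (Hmk : m = k) by lia.
    assert (E : exist _ m p = level x) by (apply subset_eq_compat; exact Hmk).
    rewrite E. ring.
  - assert (Hnil : sphere G x0 m = []).
    { destruct (sphere G x0 m) as [|y l] eqn:E; [reflexivity|].
      assert (Hy : In y (sphere G x0 m)) by (rewrite E; left; reflexivity).
      apply in_sphere in Hy. exfalso. apply p. exists y. lia. }
    rewrite Hnil. unfold wset. rewrite (lsum_zero (sphere G x0 k)) by reflexivity.
    unfold lsum. simpl. ring.
Qed.

Lemma lap_GP_spheres (f : VP G x0 -> R) x :
  let k := dist G x0 x in
  lap (GP G x0) f (level x) =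
  / mset G (sphere G x0 k) *
    (wset G (sphere G x0 k) (sphere G x0 (S k)) * (level_value f (S k) - level_value f k) +
     wset G (sphere G x0 k) (sphere G x0 (pred k)) * (level_value f (pred k) - level_value f k)).
Proof.
  intros k.
  rewrite (lap_on_cover (GP G x0) (level x) (at_level (S k) ++ at_level (pred k))).
  - rewrite lsum_app, !at_level_adjacent_sum by lia. reflexivity.
  - apply wt_GP_nonneg.
  - unfold at_level.
    destruct (excluded_middle_informative (exists y, (S k <= dist G x0 y)%nat)),
      (excluded_middle_informative (exists y, (pred k <= dist G x0 y)%nat));
      simpl; repeat constructor; try tauto.
    intros [E|[]]. apply (f_equal (@proj1_sig _ _)) in E. simpl in E. lia.
  - intros j Hj. cbn [wt GP level proj1_sig] in Hj. fold k in Hj. apply in_or_app.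
    destruct (Nat.eqb_spec (S k) (proj1_sig j)), (Nat.eqb_spec (S (proj1_sig j)) k);
      cbn [orb] in Hj; try lra; [left|left|right]; apply in_at_level; lia.
Qed.

Lemma lap_level g x : lap (GP G x0) g (level x) = lap G (lift g) x.
Proof.
  rewrite lap_GP_spheres, lift_radial, lap_radial, wset_succ.
  pose proof (mset_sphere_pos x).
  destruct (dist G x0 x) as [|k] eqn:Ex; simpl pred.
  - field. lra.
  - rewrite (wset_pred x k Ex). field. lra.
Qed.

Lemma lift_lap g : lift (lap (GP G x0) g) = lap G (lift g).
Proof. apply functional_extensionality. apply lap_level. Qed.

Lemma Gam_level g h x : Gam (GP G x0) g h (level x) = Gam G (lift g) (lift h) x.
Proof. unfold Gam. rewrite !lap_level. reflexivity. Qed.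

Lemma lift_Gam g h : lift (Gam (GP G x0) g h) = Gam G (lift g) (lift h).
Proof. apply functional_extensionality. apply Gam_level. Qed.

Lemma Gam2_level g x : Gam2 (GP G x0) g g (level x) = Gam2 G (lift g) (lift g) x.
Proof. unfold Gam2. rewrite lap_level, !Gam_level, lift_Gam, lift_lap. reflexivity. Qed.

Lemma level_surj (i : VP G x0) : exists x, level x = i.
Proof.
  destruct i as [k [y Hy]].
  destruct (dist_level_exists G wt_sym G_connected x0 y k Hy) as [x Hx].
  exists x. apply subset_eq_compat. exact Hx.
Qed.

End Projection.

Theorem corollary4 (G : wgraph) (x0 : vtx G) (K : R) (n : option R) :
  is_weighted_graph G ->
  locally_finite G ->
  connected G ->
  weakly_spherically_symmetric G x0 ->
  dim_ok n ->
  CD G K n ->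
  CD (GP G x0) K n.
Proof.
  intros [_ [Hnn [Hsym [_ Hms]]]] Hlf Hconn Hwss _ HCD f i.
  destruct (level_surj G x0 Hsym Hconn i) as [x <-].
  rewrite Gam2_level, lap_level, Gam_level by assumption.
  apply HCD.
Qed.
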